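(* Let $k \geq 3$ and $n > 3k+1$ be integers such that $n$ is $k$-admissible. Let $(V,\mathcal{A})$ be a non-reducible partial $k$-star design of order $n$ with $u(n,k)$ stars, let $L$ be the leftover of $(V,\mathcal{A})$, and let $s$ be a suitable $k$-precentral function for $L$. If $T$ is a subset of $V$ with $5 \leq |T| \leq n-5$, then $\Delta_T \geq 0$, where $\Delta_T$ is the number of edges of $L$ incident with at least one vertex of $T$ minus $k\sum_{x\in T}s(x)$.
   Context: A $k$-star is a copy of $K_{1,k}$; its vertex of degree $k$ is the centre and the others are leaves. A partial $k$-star design of order $n$ is a pair $(V,\mathcal{A})$ where $V$ is a set of $n$ vertices and $\mathcal{A}$ is a set of edge-disjoint $k$-stars that are subgraphs of the complete graph $K_V$. Its leftover $L$ is the graph on $V$ whose edges are the edges of $K_V$ lying in no star of $\mathcal{A}$. A positive integer $n$ is $k$-admissible if $\binom{n}{2}\equiv 0\pmod{k}$. Here $u(n,k)=2\lfloor\frac{n-2}{k}\rfloor-1$ if $n\not\equiv 1\pmod k$ and $u(n,k)=\frac{2(n-1)}{k}-2$ if $n\equiv 1 \pmod k$. $(V,\mathcal{A})$ is reducible if $n \equiv 1 \pmod{k}$, $|\mathcal{A}|=u(n,k)$, and some vertex is the centre of at least one star in $\mathcal{A}$ and a leaf of no star in $\mathcal{A}$; otherwise non-reducible. For a graph $G$ with $|E(G)|\equiv 0\pmod k$: a $k$-precentral function is $p:V(G)\to\mathbb{Z}_{\ge0}$ with $\sum_{x}p(x)=\frac1k|E(G)|$; $p^*(x)=p(x)-\frac{1}{2k}\deg_G(x)$;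 $p$ is proportional if $p(x)\in\{\lfloor\frac{1}{2k}\deg_G(x)\rfloor,\lceil\frac{1}{2k}\deg_G(x)\rceil\}$ for all $x$; a proportional $p$ is minimal if it minimises $\sum_x|p^*(x)|$ among proportional $k$-precentral functions. Under a minimal $m$, a vertex $y$ is bad if $\deg_G(y)<k$ and $m(y)=1$, and an edge $y_1y_2$ is bad if $m(y_1)=m(y_2)=0$. A $k$-precentral function $s$ for $G$ is suitable if one of the following holds: (i) $s=m$ for a minimal $m$ under which no vertex or edge is bad; (ii) for a minimal $m$ under which vertex $y$ is bad, $s(y)=m(y)-1=0$, $s(z)=m(z)+1$ for some vertex $z$ with $m^*(z)=\min_{x\in V(G)} m^*(x)$, and $s(x)=m(x)$ for all other $x$; (iii) for a minimal $m$ under which an edge $y_1y_2$ with $\deg_G(y_1)\le\deg_G(y_2)$ is bad, $s(y_2)=m(y_2)+1=1$, $s(z)=m(z)-1$ for some vertex $z$ with $m^*(z)=\max_{x\in V(G)}m^*(x)$, and $s(x)=m(x)$ for all other $x$. *)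

From mathcomp Require Import all_boot all_order all_algebra.
Set Implicit Arguments. Unset Strict Implicit. Unset Printing Implicit Defensive.
Import Order.TTheory GRing.Theory Num.Theory.

Section Defs.
Variable V : finType.

(* A k-star is represented by (centre, set of leaves). *)
Definition is_star (k : nat) (S : V * {set V}) : Prop :=
  S.1 \notin S.2 /\ #|S.2| = k.

Definition star_edges (S : V * {set V}) : {set {set V}} :=
  [set [set S.1; l] | l in S.2].

Definition partial_star_design (k : nat) (A : {set (V * {set V})}) : Prop :=
  (forall S, S \in A -> is_star k S) /\
  (forall S1 S2, S1 \in A -> S2 \in A -> S1 != S2 ->
     [disjoint star_edges S1 & star_edges S2]).

Definition leftover (A : {set (V * {set V})}) : {set {set V}} :=
  [set e : {set V} | (#|e| == 2) && [forall S in A, e \notin star_edges S]].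

Definition admissible (k n : nat) : bool := k %| 'C(n, 2).

Definition u_nk (n k : nat) : nat :=
  if n %% k == 1 then (2 * (n - 1)) %/ k - 2 else 2 * ((n - 2) %/ k) - 1.

Definition reducible (n k : nat) (A : {set (V * {set V})}) : Prop :=
  n %% k = 1 /\ #|A| = u_nk n k /\
  exists x : V, (exists2 S, S \in A & S.1 = x) /\ (forall S, S \in A -> x \notin S.2).

(* graph G on V given by its edge set E (a set of 2-subsets of V) *)
Definition deg (E : {set {set V}}) (x : V) : nat := #|[set e in E | x \in e]|.

Definition precentral (k : nat) (E : {set {set V}}) (p : V -> nat) : Prop :=
  k %| #|E| /\ \sum_(x : V) p x = #|E| %/ k.

Definition pstar (k : nat) (E : {set {set V}}) (p : V -> nat) (x : V) : rat :=
  ((p x)%:R - (deg E x)%:R / (2 * k)%:R)%R.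

Definition proportional (k : nat) (E : {set {set V}}) (p : V -> nat) : Prop :=
  forall x, p x = deg E x %/ (2 * k) \/ p x = (deg E x + (2 * k).-1) %/ (2 * k).

Definition minimal (k : nat) (E : {set {set V}}) (m : V -> nat) : Prop :=
  precentral k E m /\ proportional k E m /\
  forall p : V -> nat, precentral k E p -> proportional k E p ->
    (\sum_(x : V) `|pstar k E m x| <= \sum_(x : V) `|pstar k E p x|)%R.

Definition bad_vertex (k : nat) (E : {set {set V}}) (m : V -> nat) (y : V) : Prop :=
  deg E y < k /\ m y = 1.

Definition bad_edge (E : {set {set V}}) (m : V -> nat) (y1 y2 : V) : Prop :=
  [set y1; y2] \in E /\ m y1 = 0 /\ m y2 = 0.

Definition suitable (k : nat) (E : {set {set V}}) (s : V -> nat) : Prop :=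
  precentral k E s /\
  ( (exists m, minimal k E m /\ (forall y, ~ bad_vertex k E m y) /\
        (forall y1 y2, ~ bad_edge E m y1 y2) /\ (forall x, s x = m x))
  \/ (exists m y z, minimal k E m /\ bad_vertex k E m y /\
        s y = 0 /\ m y - 1 = 0 /\
        (forall x, (pstar k E m z <= pstar k E m x)%R) /\ s z = m z + 1 /\
        (forall x, x != y -> x != z -> s x = m x))
  \/ (exists m y1 y2 z, minimal k E m /\ bad_edge E m y1 y2 /\
        deg E y1 <= deg E y2 /\
        s y2 = m y2 + 1 /\ m y2 + 1 = 1 /\
        (forall x, (pstar k E m x <= pstar k E m z)%R) /\ s z + 1 = m z /\
        (forall x, x != y2 -> x != z -> s x = m x))).

Definition delta (k : nat) (E : {set {set V}}) (s : V -> nat) (T : {set V}) : int :=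
  (#|[set e in E | [exists x in T, x \in e]]|%:Z - (k * \sum_(x in T) s x)%:Z)%R.

End Defs.

From mathcomp Require Import all_boot all_order all_algebra.
From mathcomp Require Import zify ring lra.
Import Order.TTheory GRing.Theory Num.Theory.

(* Write s* = pstar and let c be the number of leftover edges between T and
   its complement. Double counting gives 2 Delta_T = c - 2k sum_T s*, so it
   suffices to show 2k sum_T s* <= c.
   Every pair {x, y} with x in T and y outside T is either a leftover edge or
   an edge of a star, hence c >= |T| (n - |T|) - k u(n, k).
   On the other side sum_V s* = 0, and a minimal function m satisfies
   m*(x) - m*(y) <= 1 for all x, y (otherwise shifting one unit from x to y
   would decrease sum |m*|). A suitable s differs from such an m by at most
   one unit moved between two vertices, which still gives
   (n - 1) sum_T s* <= |T| (n - |T|).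
   The two bounds combine through |T| (n - |T|) >= 5 (n - 5) and the numerical
   inequality (n - 1) k u(n, k) <= 5 (n - 5) (n - 1 - 2k), which holds for
   n >= 3k + 3; admissibility rules out n = 3k + 2. *)

Set Implicit Arguments.
Unset Strict Implicit.
Unset Printing Implicit Defensive.

Lemma card_set_sum (I : finType) (A : {set I}) (P : pred I) :
  #|[set i in A | P i]| = \sum_(i in A) P i.
Proof. by rewrite -big_mkcondr sum1_card; apply: eq_card => i; rewrite !inE. Qed.

Lemma leq_card_bigcup (I T : finType) (P : pred I) (F : I -> {set T}) :
  #|\bigcup_(i | P i) F i| <= \sum_(i | P i) #|F i|.
Proof.
elim/big_ind2: _ => // [|U1 n1 U2 n2 le1 le2]; first by rewrite cards0.
exact: leq_trans (leq_card_setU _ _).1 (leq_add le1 le2).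
Qed.

Lemma setI_pair (T : finType) (a b : T) (B : {set T}) :
  a \in B -> b \notin B -> [set a; b] :&: B = [set a].
Proof.
move=> aB bB; apply/setP => z; rewrite !inE.
by case: (eqVneq z a) => [->|_]; [rewrite aB | case: eqP => // ->; rewrite (negbTE bB)].
Qed.

Lemma bigD2 (R : Type) (idx : R) (op : Monoid.com_law idx) (I : finType)
    (F : I -> R) x y : x != y ->
  \big[op/idx]_i F i = op (op (F x) (F y)) (\big[op/idx]_(i | (i != x) && (i != y)) F i).
Proof. by move=> xy; rewrite (bigD1 x) // (bigD1 y) 1?eq_sym //= Monoid.mulmA. Qed.

Section EdgeCounting.
Variables (V : finType) (E : {set {set V}}).
Hypothesis E2 : forall e, e \in E -> #|e| = 2.

Definition cut (T : {set V}) : nat := #|[set e in E | #|e :&: T| == 1]|.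

Lemma sum_deg_setI (T : {set V}) : \sum_(x in T) deg E x = \sum_(e in E) #|e :&: T|.
Proof.
under eq_bigr do rewrite /deg card_set_sum.
rewrite exchange_big; apply: eq_bigr => e _.
by rewrite -card_set_sum; apply: eq_card => x; rewrite !inE andbC.
Qed.

Lemma card_edges_meeting (T : {set V}) :
  2 * #|[set e in E | [exists x in T, x \in e]]| = cut T + \sum_(x in T) deg E x.
Proof.
rewrite sum_deg_setI /cut !card_set_sum big_distrr -big_split /=.
apply: eq_bigr => e eE.
have le2 : #|e :&: T| <= 2 by rewrite -(E2 eE) subset_leq_card ?subsetIl.
have -> : [exists x in T, x \in e] = (0 < #|e :&: T|).
  rewrite card_gt0; apply/existsP/set0Pn => -[x].
    by case/andP=> xT xe; exists x; rewrite inE xe.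
  by rewrite inE => /andP[xe xT]; exists x; rewrite xT.
by case: #|e :&: T| le2 => [|[|[|]]].
Qed.

Lemma sum_deg : \sum_x deg E x = 2 * #|E|.
Proof.
rewrite -big_set /= sum_deg_setI (eq_bigr (fun=> 2)) ?sum_nat_const 1?mulnC // => e eE.
by rewrite setIT E2.
Qed.

End EdgeCounting.

Lemma leftover_cut_lb (V : finType) k (A : {set V * {set V}}) (T : {set V}) :
  (forall S, S \in A -> #|S.2| = k) ->
  #|T| * #|~: T| <= cut (leftover A) T + k * #|A|.
Proof.
move=> card_leaves.
pose pairs := [set [set p.1; p.2] | p in setX T (~: T)].
have pairI p : p \in setX T (~: T) ->
    [set p.1; p.2] :&: T = [set p.1] /\ [set p.1; p.2] :&: ~: T = [set p.2].
  by rewrite !inE => /andP[p1T p2T]; split; [|rewrite setUC];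
    apply: setI_pair; rewrite ?inE ?negbK.
have card_pairs : #|pairs| = #|T| * #|~: T|.
  rewrite card_in_imset ?cardsX // => -[a b] [c d] /pairI[ab1 ab2] /pairI[cd1 cd2] /= eq_ac.
  by congr pair; apply: set1_inj; [rewrite -ab1 -cd1 | rewrite -ab2 -cd2]; rewrite eq_ac.
have card_star_edges : #|\bigcup_(S in A) star_edges S| <= k * #|A|.
  apply: leq_trans (leq_card_bigcup _ _) _; rewrite mulnC -sum_nat_const.
  by apply: leq_sum => S /card_leaves <-; apply: leq_imset_card.
have pairs_sub : pairs \subset
    [set e in leftover A | #|e :&: T| == 1] :|: \bigcup_(S in A) star_edges S.
  apply/subsetP => _ /imsetP[p pT ->]; have [pT1 _] := pairI p pT.
  have p12 : p.1 != p.2 by move: pT; rewrite !inE => /andP[p1T]; apply: contraNneq => <-.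
  rewrite !inE pT1 cards1 cards2 p12 /=.
  case: (boolP [forall S in A, _]) => //= /forall_inPn[S SA /negPn pS].
  by apply/bigcupP; exists S.
rewrite -card_pairs /cut (leq_trans (subset_leq_card pairs_sub)) //.
by rewrite (leq_trans (leq_card_setU _ _).1) // leq_add2l.
Qed.

Lemma floor_or_ceil_iff (p d D : nat) : 0 < D ->
  p = d %/ D \/ p = (d + D.-1) %/ D <-> p * D < d + D /\ d < p * D + D.
Proof.
move=> D0; split.
  case=> ->; have := leq_divM _ D; have := ltn_ceil _ D0; lia.
have div_eq m : p * D <= m < p.+1 * D -> p = m %/ D.
  by case/andP=> lo hi; apply/eqP; rewrite eqn_leq leq_divRL // lo /= -ltnS ltn_divLR.
case: (leqP (p * D) d) => pd [lo hi]; [left | right]; apply: div_eq; apply/andP; lia.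
Qed.

Section Pstar.
Variables (V : finType) (k : nat) (E : {set {set V}}).
Hypothesis k_gt0 : 0 < k.
Local Open Scope ring_scope.

Lemma pstar_norm_lt1 (p : V -> nat) x :
  `|pstar k E p x| < 1 <->
  (p x * (2 * k) < deg E x + 2 * k)%N /\ (deg E x < p x * (2 * k) + 2 * k)%N.
Proof.
have D0 : 0 < (2 * k)%:R :> rat by rewrite ltr0n; lia.
have -> : pstar k E p x = ((p x * (2 * k))%:R - (deg E x)%:R) / (2 * k)%:R.
  by rewrite /pstar natrM; field; rewrite pnatr_eq0 -lt0n.
rewrite normf_div (gtr0_norm D0) ltr_pdivrMr // mul1r ltr_distl.
by rewrite ltrBlDr -!natrD !ltr_nat andbC; split=> /andP.
Qed.

Lemma proportionalE (p : V -> nat) :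
  proportional k E p <-> forall x, `|pstar k E p x| < 1.
Proof.
have D0 : (0 < 2 * k)%N by lia.
split=> h x; first by apply/pstar_norm_lt1/floor_or_ceil_iff.
by apply/floor_or_ceil_iff/pstar_norm_lt1.
Qed.

Lemma sum_pstar_eq0 (p : V -> nat) :
  (forall e, e \in E -> #|e| = 2) -> precentral k E p -> \sum_x pstar k E p x = 0.
Proof.
move=> E2 [/dvdnP[q cardE] sum_p].
rewrite sumrB -mulr_suml -!natr_sum sum_p sum_deg // cardE mulnK //.
by rewrite mulnCA natrM mulfK ?subrr // pnatr_eq0 -lt0n muln_gt0.
Qed.

Lemma minimal_pstar_window (m : V -> nat) x y :
  minimal k E m -> pstar k E m x - pstar k E m y <= 1.
Proof.
case=> [[kE sum_m] [/proportionalE norm_m min_m]].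
set a := pstar k E m x; set b := pstar k E m y; rewrite leNgt; apply/negP => gap.
have /andP[a_gt a_lt] : -1 < a < 1 by rewrite -ltr_norml norm_m.
have /andP[b_gt b_lt] : -1 < b < 1 by rewrite -ltr_norml norm_m.
have a_gt0 : 0 < a by lra.
have b_lt0 : b < 0 by lra.
have xy : x != y by apply: contraTneq gap => exy; rewrite /a /b exy subrr ltr10.
have yx : y != x by rewrite eq_sym.
have mx_gt0 : (0 < m x)%N.
  have deg_ge0 : 0 <= (deg E x)%:R / (2 * k)%:R :> rat by rewrite divr_ge0.
  by rewrite -(ltr_nat rat); move: a_gt0; rewrite /a /pstar; lra.
pose m' v := (m v + (v == y) - (v == x))%N.
have pstar_m' v : pstar k E m' v = pstar k E m v + (v == y)%:R - (v == x)%:R.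
  rewrite /pstar /m' natrB ?natrD; first ring.
  by case: (eqVneq v x) => [->|_]; rewrite ?(leq_trans mx_gt0) ?leq_addr.
have m'_prec : precentral k E m'.
  split=> //; rewrite -sum_m !(bigD2 _ _ xy) /m' /= !eqxx (negbTE xy) (negbTE yx).
  rewrite (eq_bigr m) => [|v /andP[/negbTE-> /negbTE->]]; last by rewrite addn0 subn0.
  lia.
have m'_prop : proportional k E m'.
  apply/proportionalE => v; rewrite pstar_m' ltr_norml.
  case: (eqVneq v x) => [->|_]; first by rewrite (negbTE xy) -/a /=; apply/andP; lra.
  case: (eqVneq v y) => [->|_] /=; first by rewrite -/b; apply/andP; lra.
  by rewrite addr0 subr0 -ltr_norml norm_m.
have tail : \sum_(v | (v != x) && (v != y)) `|pstar k E m' v|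
          = \sum_(v | (v != x) && (v != y)) `|pstar k E m v|.
  by apply: eq_bigr => v /andP[/negbTE vx /negbTE vy]; rewrite pstar_m' vx vy addr0 subr0.
have := min_m m' m'_prec m'_prop; rewrite !(bigD2 _ _ xy) /= tail !pstar_m'.
rewrite !eqxx (negbTE xy) (negbTE yx) /= addr0 subr0 -/a -/b.
by rewrite (gtr0_norm a_gt0) (ltr0_norm b_lt0) ltr0_norm ?gtr0_norm; lra.
Qed.

End Pstar.

Section CutSums.
Variables (V : finType) (R : realFieldType) (f : V -> R).
Local Open Scope ring_scope.
Hypothesis sum_f0 : \sum_x f x = 0.

Lemma sum_setC_opp (T : {set V}) : \sum_(x in ~: T) f x = - \sum_(x in T) f x.
Proof.
have := sum_f0; rewrite (bigID (fun x => x \in T)) /= => /eqP; rewrite addr_eq0 => /eqP->.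
by rewrite opprK; apply: eq_bigl => x; rewrite inE.
Qed.

Lemma sum_cut_diff (T : {set V}) :
  #|V|%:R * \sum_(x in T) f x = \sum_(x in T) \sum_(y in ~: T) (f x - f y).
Proof.
under [RHS]eq_bigr do rewrite sumrB sumr_const sum_setC_opp opprK.
by rewrite big_split /= sumr_const sumrMnl -mulrnDr addnC cardsC mulr_natl.
Qed.

(* Each pair (x, y) across the cut contributes at most 1 to sum_cut_diff,
   except that a pair (x, b) contributes at most f x + 1. *)
Lemma sum_cut_le (b : V) (T : {set V}) :
  (forall x y, y != b -> f x - f y <= 1) -> - f b <= 1 ->
  (#|V|%:R - 1) * \sum_(x in T) f x <= (#|T| * #|~: T|)%:R.
Proof.
move=> f_window fb; set S := \sum_(x in T) f x.
have sum_at_b x : \sum_(y in ~: T) (y == b)%:R * f x = (b \notin T)%:R * f x.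
  rewrite -mulr_suml; congr (_ * _); case: (boolP (b \in T)) => bT /=.
    by rewrite big1 // => y; rewrite inE; case: eqP => // -> /negP.
  by rewrite (bigD1 b) ?inE //= eqxx big1 ?addr0 // => y /andP[_ /negbTE->].
have le_pairs : #|V|%:R * S <= (#|T| * #|~: T|)%:R + (b \notin T)%:R * S.
  rewrite sum_cut_diff.
  apply: le_trans (_ : _ <= \sum_(x in T) \sum_(y in ~: T) (1 + (y == b)%:R * f x)) _.
    apply: ler_sum => x _; apply: ler_sum => y _.
    by case: (eqVneq y b) => [->|yb]; rewrite ?mul1r ?mul0r ?addr0 ?f_window //; lra.
  under eq_bigr do rewrite big_split /= sumr_const sum_at_b.
  by rewrite big_split /= sumr_const -mulr_sumr -/S natrM !mulr_natl.
have n_ge1 : 1 <= #|V|%:R :> R by rewrite ler1n; apply/card_gt0P; exists b.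
have P_ge0 : 0 <= (#|T| * #|~: T|)%:R :> R by [].
by case: (b \notin T) le_pairs => /= ?; [lra | nra].
Qed.

Lemma sum_cut_le_shift (h : V -> R) (z w : V) (T : {set V}) :
  (forall x y, h x - h y <= 1) -> (forall x, h z <= h x) ->
  (forall x, f x = h x + (x == z)%:R - (x == w)%:R) -> - f w <= 1 ->
  (#|V|%:R - 1) * \sum_(x in T) f x <= (#|T| * #|~: T|)%:R.
Proof.
move=> h_window h_min f_h fw; apply: (sum_cut_le (b := w)) => // x y /negbTE yw.
rewrite !f_h yw; case: (eqVneq x z) => [->|_].
  by have := h_min y; case: (y == z) (z == w) => [] [] /=; lra.
by have := h_window x y; case: (y == z) (x == w) => [] [] /=; lra.
Qed.

End CutSums.

Section SuitableBound.
Variables (V : finType) (k : nat) (E : {set {set V}}).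
Hypotheses (k_gt0 : 0 < k) (E2 : forall e, e \in E -> #|e| = 2).
Local Open Scope ring_scope.

(* Case (iii) of suitability is handled as case (ii) for -s* and ~: T. *)
Lemma suitable_pstar_sum_bound (s : V -> nat) (T : {set V}) :
  suitable k E s ->
  (#|V|%:R - 1) * \sum_(x in T) pstar k E s x <= (#|T| * #|~: T|)%:R.
Proof.
case=> s_prec cases; set f := pstar k E s.
have f_sum0 : \sum_x f x = 0 by apply: sum_pstar_eq0.
have f_shift (m : V -> nat) x : f x = pstar k E m x + (s x)%:R - (m x)%:R.
  by rewrite /f /pstar; ring.
have D0 : 0 < (2 * k)%:R :> rat by rewrite ltr0n muln_gt0.
case: cases => [[m [m_min [_ [_ s_m]]]]
  | [[m [y [z [m_min [[deg_y m_y] [s_y [_ [z_min [s_z s_other]]]]]]]]]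
  | [m [_ [y2 [z [m_min [[_ [_ m_y2]] [_ [s_y2 [_ [z_max [s_z s_other]]]]]]]]]]]]].
- case: (set_0Vmem T) => [->|[b _]]; first by rewrite big_set0 mulr0.
  apply: (sum_cut_le f_sum0 (b := b)) => [x y _|].
    by rewrite !(f_shift m) !s_m !addrK; apply: minimal_pstar_window.
  have [_ [/(proportionalE _ k_gt0) m_prop _]] := m_min.
  by rewrite (f_shift m) s_m addrK; have := m_prop b; rewrite ltr_norml => /andP[? _]; lra.
- have zy : z != y by apply/eqP => ezy; move: s_z; rewrite ezy s_y m_y.
  have f_m x : f x = pstar k E m x + (x == z)%:R - (x == y)%:R.
    rewrite (f_shift m) -!addrA; congr (_ + _).
    case: (eqVneq x y) => [->|xy]; first by rewrite s_y m_y eq_sym (negbTE zy).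
    case: (eqVneq x z) => [->|xz]; first by rewrite s_z natrD /=; ring.
    by rewrite s_other // subrr subr0.
  apply: (sum_cut_le_shift f_sum0 T _ z_min f_m) => [? ?|].
    exact: minimal_pstar_window.
  by rewrite /f /pstar s_y sub0r opprK ler_pdivrMr // mul1r ler_nat; lia.
- have m_y2' : m y2 = 0%N by lia.
  have zy : z != y2 by apply/eqP => ezy; move: s_z; rewrite ezy s_y2 m_y2'.
  have f_m x : - f x = - pstar k E m x + (x == z)%:R - (x == y2)%:R.
    rewrite (f_shift m) !opprD opprK -!addrA; congr (_ + _).
    case: (eqVneq x y2) => [->|xy]; first by rewrite s_y2 m_y2' eq_sym (negbTE zy) /=; ring.
    case: (eqVneq x z) => [->|xz]; first by rewrite -s_z natrD /=; ring.
    by rewrite s_other // subrr oppr0 subr0.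
  have opp_f_sum0 : \sum_x - f x = 0 by rewrite sumrN f_sum0 oppr0.
  have := sum_cut_le_shift opp_f_sum0 (h := fun x => - pstar k E m x) (~: T).
  rewrite sumrN (sum_setC_opp f_sum0) (opprK (\sum_(x in T) f x)) setCK mulnC.
  apply=> // [? ?|?|].
  + by rewrite opprK addrC; apply: minimal_pstar_window.
  + by rewrite lerN2.
  have deg_ge0 : 0 <= (deg E y2)%:R / (2 * k)%:R :> rat by rewrite divr_ge0 // ltW.
  by rewrite opprK /f /pstar s_y2 m_y2' /=; lra.
Qed.

End SuitableBound.

Lemma u_nk_bound_mod1 n q k : 3 <= k -> 4 <= q -> n = q * k + 1 ->
  (n - 1) * (k * (2 * q - 2)) <= 5 * (n - 5) * (n - 1 - 2 * k).
Proof.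
move=> /subnK <- /subnK <- ->; move: (k - 3) (q - 4) => b a.
have -> : (a + 4) * (b + 3) + 1 - 5 = a * b + 3 * a + 4 * b + 8 by nia.
have -> : (a + 4) * (b + 3) + 1 - 1 - 2 * (b + 3) = (a + 2) * (b + 3) by nia.
have -> : 2 * (a + 4) - 2 = 2 * a + 6 by lia.
rewrite addnK; nia.
Qed.

Lemma u_nk_bound_nmod1 n a r k : 3 <= k -> r < k -> n = a * k + r + 2 -> 3 * k + 3 <= n ->
  (n - 1) * (k * (2 * a - 1)) <= 5 * (n - 5) * (n - 1 - 2 * k).
Proof.
move=> /subnK k_eq r_lt n_eq n_ge; rewrite -k_eq in r_lt n_eq n_ge *; subst n.
move: (k - 3) r_lt n_ge => b r_lt n_ge.
case: (ltngtP a 3) => [a_lt3 | /subnK <- | a_eq]; first nia.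
- move: (a - 4) => e.
  have -> : (e + 4) * (b + 3) + r + 2 - 5 = e * b + 3 * e + 4 * b + 9 + r by nia.
  have -> : (e + 4) * (b + 3) + r + 2 - 1 - 2 * (b + 3) = (e + 2) * (b + 3) + r + 1 by nia.
  have -> : (e + 4) * (b + 3) + r + 2 - 1 = (e + 4) * (b + 3) + r + 1 by lia.
  have -> : 2 * (e + 4) - 1 = 2 * e + 7 by lia.
  clear; nia.
- subst a; have /subnK <- : 1 <= r by lia.
  move: (r - 1) => c.
  have -> : 3 * (b + 3) + (c + 1) + 2 - 5 = 3 * b + c + 7 by lia.
  have -> : 3 * (b + 3) + (c + 1) + 2 - 1 - 2 * (b + 3) = b + c + 5 by lia.
  have -> : 3 * (b + 3) + (c + 1) + 2 - 1 = 3 * b + c + 11 by lia.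
  clear; nia.
Qed.

Lemma u_nk_bound n k : 3 <= k -> 3 * k + 3 <= n ->
  (n - 1) * (k * u_nk n k) <= 5 * (n - 5) * (n - 1 - 2 * k).
Proof.
move=> k3 n_ge; have k0 : 0 < k by lia.
rewrite /u_nk; case: ifP => [/eqP n_mod | _].
  have n_eq : n = n %/ k * k + 1 by rewrite {1}(divn_eq n k) n_mod.
  have -> : (2 * (n - 1)) %/ k = 2 * (n %/ k) by rewrite {1}n_eq addnK mulnA mulnK.
  apply: (u_nk_bound_mod1 k3 _ n_eq).
  by rewrite ltnNge; apply/negP => q3; move: n_ge; rewrite n_eq; nia.
apply: (u_nk_bound_nmod1 k3 (ltn_pmod (n - 2) k0) _ n_ge).
by rewrite -divn_eq subnK //; lia.
Qed.

(* For n = 3k + 2 we get 2 C(n, 2) = k (9k + 9) + 2, which k >= 3 cannot divide. *)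
Lemma admissible_gap k n : 3 <= k -> 3 * k + 1 < n -> admissible k n -> 3 * k + 3 <= n.
Proof.
move=> k3 n_gt k_dvd; rewrite leqNgt; apply/negP => n_lt.
have := dvdn_mull 2 k_dvd; rewrite -mul_bin_diag bin1.
have n_eq : n = 3 * k + 2 by lia.
have -> : n * n.-1 = k * (9 * k + 9) + 2 by rewrite n_eq; nia.
by rewrite dvdn_addr ?dvdn_mulr // => /dvdn_leq; lia.
Qed.

Lemma five_mul_le_mul_sub t n : 5 <= t -> t <= n - 5 -> 5 * (n - 5) <= t * (n - t).
Proof.
move=> t_ge t_le; have u_ge : 5 <= n - t by lia.
have -> : n = t + (n - t) by lia.
by rewrite addKn; move: (n - t) u_ge => u u_ge; nia.
Qed.

Lemma delta_ge0_of_cut (V : finType) k (E : {set {set V}}) (s : V -> nat) (T : {set V}) :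
  0 < k -> (forall e, e \in E -> #|e| = 2) ->
  ((2 * k)%:R * \sum_(x in T) pstar k E s x <= (cut E T)%:R :> rat)%R ->
  (0 <= delta k E s T)%R.
Proof.
move=> k0 E2 cut_ge; rewrite -(ler_int rat) /delta intrB -!pmulrn.
have := congr1 (GRing.natmul (1 : rat)) (card_edges_meeting E2 T).
rewrite natrM natrD => edgesT.
move: cut_ge; rewrite /pstar sumrB -mulr_suml -!natr_sum mulrBr mulrCA mulfV ?mulr1.
  by rewrite !natrM in edgesT *; lra.
by rewrite pnatr_eq0 muln_eq0 negb_or -!lt0n k0.
Qed.

Lemma weighted_cut_bound (R : realFieldType) (N t S P c K : R) :
  (0 < N -> 0 <= t -> N * S <= P -> P <= c + K -> N * K <= (N - t) * P -> t * S <= c)%R.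
Proof. by move=> N_gt0 t_ge0 NS_le P_le NK_le; nra. Qed.

Theorem lemma17 (V : finType) (k n : nat) (A : {set (V * {set V})})
    (s : V -> nat) (T : {set V}) :
  3 <= k -> 3 * k + 1 < n -> #|V| = n -> admissible k n ->
  partial_star_design k A -> #|A| = u_nk n k -> ~ reducible n k A ->
  suitable k (leftover A) s ->
  5 <= #|T| -> #|T| <= n - 5 ->
  (0 <= delta k (leftover A) s T)%R.
Proof.
move=> k3 n_gt V_n adm [stars _] card_A _ suit T_ge T_le.
have k_gt0 : 0 < k by lia.
have E2 e : e \in leftover A -> #|e| = 2 by rewrite inE => /andP[/eqP].
have n_ge := admissible_gap k3 n_gt adm.
have card_TC : #|~: T| = n - #|T| by rewrite -V_n -(cardsC T) addKn.
apply: delta_ge0_of_cut => //.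
apply: (@weighted_cut_bound _ (n - 1)%:R _ _ (#|T| * #|~: T|)%:R _ (k * #|A|)%:R).
- by rewrite ltr0n; lia.
- by rewrite ler0n.
- rewrite natrB -?V_n; last by lia.
  exact: suitable_pstar_sum_bound.
- by rewrite -natrD ler_nat; apply: leftover_cut_lb => S /stars[].
rewrite -natrB; last by lia.
rewrite -!natrM ler_nat card_TC card_A (leq_trans (u_nk_bound k3 n_ge)) //.
by rewrite [X in _ <= X]mulnC leq_mul2r five_mul_le_mul_sub ?orbT.
Qed.
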